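(* In the two-stage mining game, fix all parameters except $\eta$ and consider $\eta$ large enough that $A(\beta^* )=A(0)=\{1,\dots,n\}$. Then, as $\eta\to\infty$, for each active miner $i\le n$, $$h_i^*(\beta^* )=h_i^*(0)+a_iI_i+a_{-i}\bar I_{-i}+O(\bar I^2),$$ where $$a_{-i}:=\frac{h_{i,0}}{c_0^{(n)}+2\gamma H_0}\Big(1-\frac{H_0^2}{R+\gamma H_0^2}\cdot\frac{\tilde c_i+2\gamma h_{i,0}}{h_{i,0}}\Big),\qquad a_i:=\frac{H_0^2}{R+\gamma H_0^2}+a_{-i},$$ and these satisfy $a_i>0$ and $a_{-i}<0\iff h_{i,0}/H_0<1/2$. Moreover, $$\frac{h_i^*(\beta^* )}{H^*(\beta^* )}=\frac{h_{i,0}}{H_0}+\alpha_0\big((1-\alpha_i)I_i-\alpha_i\bar I_{-i}\big)+O(\bar I^2),$$ where $\alpha_0:=\frac{H_0}{R+\gamma H_0^2}>0$ and $\alpha_i:=\frac{\tilde c_i+2\gamma h_{i,0}}{c_0^{(n)}+2\gamma H_0}\in(0,1)$; and the quantity $(1-\alpha_i)I_i-\alpha_i\bar I_{-i}$ is increasing in the initial cost $\tilde c_i$ of miner $i$ (i.e., across active miners, it is larger for miners with larger initial cost). Here $O(\bar I^2)$ denotes a remainder bounded in absolute value by $C\bar I^2$ for some constant $C$ and all sufficiently large $\eta$.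
   Context: Two-stage mining game: $N\ge2$ miners with initial costs-per-hash $0<\tilde c_1\le\dots\le\tilde c_N$; newest hardware cost $\tilde c_0\le\tilde c_1$; parameters $\eta\ge0$, $R>0$, $\gamma\ge0$, $K>0$. Stage 1: miner $i$ picks $\beta_i\in[0,1]$, giving cost $c_i(\beta_i)=\tilde c_i-\beta_i(\tilde c_i-\tilde c_0)+\frac{\eta(\tilde c_i-\tilde c_0)}{2}\beta_i^2$. Stage 2: given $\beta$, miners pick $h_i\ge0$, $H=\sum_jh_j$, payoff $\frac{h_i}{H}R-c_i(\beta_i)h_i-\frac{\gamma}{2}h_i^2-K\mathbf 1_{\{i\notin A(0),\beta_i>0\}}$ if $H>0$, else $0$; $h^*(\beta)$ is the unique stage-2 pure Nash equilibrium, $H^*(\beta)=\sum_jh^*_j(\beta)$, $A(\beta)=\{i:h_i^*(\beta)>0\}$. The equilibrium investment (subgame-perfect in $\beta$) is $\beta_i^*=\min\{1/\eta,1\}$ for active miners and $0$ otherwise. Notation: $H_0=H^*(0)$, $h_{i,0}=h_i^*(0)$, $c_0^{(n)}=\sum_{i=1}^n\tilde c_i$; the cost reduction of active miner $i$ is $I_i:=c_i(0)-c_i(\beta_i^* )$, which equals $(\tilde c_i-\tilde c_0)/(2\eta)$ for $\eta>1$; $\bar I=\sum_{i=1}^nI_i$ and $\bar I_{-i}=\bar I-I_i$. *)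

From HB Require Import structures.
From mathcomp Require Import all_boot all_order all_algebra.
From mathcomp Require Import reals.
Set Implicit Arguments. Unset Strict Implicit. Unset Printing Implicit Defensive.
Import Order.TTheory GRing.Theory Num.Theory.
Local Open Scope ring_scope.

(* Miners are indexed by 'I_N (0-based: miner k of the paper is index k-1).
   ct i = initial cost-per-hash c~_{i+1}, ct0 = c~_0, Rw = reward R. *)

Definition cost (R : realType) (ct0 cti eta beta : R) : R :=
  cti - beta * (cti - ct0) + eta * (cti - ct0) / 2 * beta ^+ 2.

Definition totH (R : realType) (N : nat) (h : 'I_N -> R) : R :=
  \sum_(j < N) h j.

Definition upd (R : realType) (N : nat) (h : 'I_N -> R) (i : 'I_N) (x : R)
  : 'I_N -> R := fun j => if j == i then x else h j.

(* stage-2 payoff of miner i; A0 is the set A(0) appearing in the entry cost K *)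
Definition payoff (R : realType) (N : nat) (ct : 'I_N -> R) (ct0 eta Rw gamma K : R)
  (A0 : pred 'I_N) (beta : 'I_N -> R) (h : 'I_N -> R) (i : 'I_N) : R :=
  if 0 < totH h then
    h i / totH h * Rw - cost ct0 (ct i) eta (beta i) * h i - gamma / 2 * h i ^+ 2
    - (if ~~ A0 i && (0 < beta i) then K else 0)
  else 0.

Definition is_NE (R : realType) (N : nat) (ct : 'I_N -> R) (ct0 eta Rw gamma K : R)
  (A0 : pred 'I_N) (beta : 'I_N -> R) (h : 'I_N -> R) : Prop :=
  (forall i, 0 <= h i) /\
  (forall i x, 0 <= x ->
     payoff ct ct0 eta Rw gamma K A0 beta (upd h i x) i
     <= payoff ct ct0 eta Rw gamma K A0 beta h i).

Definition beta_star (R : realType) (N : nat) (n : nat) (eta : R) : 'I_N -> R :=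
  fun i => if (i < n)%N then Num.min eta^-1 1 else 0.
Arguments beta_star {R} N n eta _.

Definition Ired (R : realType) (N : nat) (ct : 'I_N -> R) (ct0 : R) (n : nat)
  (eta : R) (i : 'I_N) : R :=
  cost ct0 (ct i) eta 0 - cost ct0 (ct i) eta (beta_star N n eta i).

Definition Ibar (R : realType) (N : nat) (ct : 'I_N -> R) (ct0 : R) (n : nat)
  (eta : R) : R :=
  \sum_(j < N | (j < n)%N) Ired ct ct0 n eta j.

Definition csum (R : realType) (N : nat) (ct : 'I_N -> R) (n : nat) : R :=
  \sum_(j < N | (j < n)%N) ct j.

Definition a_minus (R : realType) (N : nat) (ct : 'I_N -> R) (Rw gamma : R)
  (n : nat) (h0 : 'I_N -> R) (i : 'I_N) : R :=
  h0 i / (csum ct n + 2 * gamma * totH h0) *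
  (1 - (totH h0) ^+ 2 / (Rw + gamma * (totH h0) ^+ 2)
       * ((ct i + 2 * gamma * h0 i) / h0 i)).

Definition a_plus (R : realType) (N : nat) (ct : 'I_N -> R) (Rw gamma : R)
  (n : nat) (h0 : 'I_N -> R) (i : 'I_N) : R :=
  (totH h0) ^+ 2 / (Rw + gamma * (totH h0) ^+ 2) + a_minus ct Rw gamma n h0 i.

Definition alpha0 (R : realType) (N : nat) (Rw gamma : R) (h0 : 'I_N -> R) : R :=
  totH h0 / (Rw + gamma * (totH h0) ^+ 2).

Definition alpha_i (R : realType) (N : nat) (ct : 'I_N -> R) (gamma : R)
  (n : nat) (h0 : 'I_N -> R) (i : 'I_N) : R :=
  (ct i + 2 * gamma * h0 i) / (csum ct n + 2 * gamma * totH h0).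

Definition Qshift (R : realType) (N : nat) (ct : 'I_N -> R) (ct0 gamma : R)
  (n : nat) (h0 : 'I_N -> R) (eta : R) (i : 'I_N) : R :=
  (1 - alpha_i ct gamma n h0 i) * Ired ct ct0 n eta i
  - alpha_i ct gamma n h0 i * (Ibar ct ct0 n eta - Ired ct ct0 n eta i).

From HB Require Import structures.
From mathcomp Require Import all_boot all_order all_algebra.
From mathcomp Require Import reals ring lra.
Import Order.TTheory GRing.Theory Num.Theory.
Local Open Scope ring_scope.
Set Implicit Arguments. Unset Strict Implicit. Unset Printing Implicit Defensive.

(* At an interior stage-2 equilibrium the first-order condition of an active miner j reads
   R (H - h_j) = (c_j + gamma h_j) H^2, i.e. h_j (R + gamma H^2) = H (R - c_j H); summing over
   the n active miners gives R + gamma H^2 = n R - (sum_j c_j) H.  Investment lowers c_j by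
   I_j, and comparing the two aggregate equations yields
   (H_1 - H_0) (gamma (H_1 + H_0) + c_0^(n)) = Ibar H_1, so 0 <= H_1 - H_0 = O(Ibar).
   Substituting into the closed form of h_i, an exact rational identity writes the error of
   the linear approximation of h_i (and of h_i / H) as a combination of I_i (H_1 - H_0),
   (H_1 - H_0)^2 and (H_1 - H_0) (Ibar - gamma (H_1 - H_0)) with coefficients bounded
   uniformly in eta, hence O(Ibar^2).  The signs of the coefficients are read off the closed
   form of h_{i,0}, and the monotonicity in the initial cost follows from
   I_j - I_i = (c_j - c_i) / (2 eta) together with 2 eta Ibar < c_0^(n). *)

Section BestResponse.
Variable R : realType.

Lemma ler_of_small_slack (a b L d : R) : 0 < d ->
  (forall t, 0 < t -> t <= d -> a <= b + t * L) -> a <= b.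
Proof.
move=> d_gt0 near_b; apply/ler_addgt0Pr => e e_gt0.
pose t := Num.min d (e / (`|L| + 1)).
have L1_gt0 : 0 < `|L| + 1 by rewrite ltr_pwDr.
have t_gt0 : 0 < t by rewrite lt_min d_gt0 divr_gt0.
have tL_le_e : t * L <= e.
  have : t <= e / (`|L| + 1) by rewrite ge_min lexx orbT.
  rewrite ler_pdivlMr // => te.
  apply: le_trans te; rewrite ler_pM2l //; apply: le_trans (ler_norm L) _; lra.
apply: le_trans (near_b t t_gt0 _) _; first by rewrite ge_min lexx.
by rewrite lerD2l.
Qed.

Variables (Rw S h c g k : R).
Hypotheses (Rw_ge0 : 0 <= Rw) (S_ge0 : 0 <= S) (h_gt0 : 0 < h).

Let u x := x / (S + x) * Rw - c * x - g / 2 * x ^+ 2.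
Let H := S + h.
Let marginal := Rw * S / H ^+ 2 - (c + g * h).
Let curvature t := Rw * S / (H ^+ 2 * (H + t)) + g / 2.

Lemma payoff_increment t : 0 < H + t ->
  u (h + t) - u h = t * (marginal - t * curvature t).
Proof.
move=> Ht_gt0; have H_gt0 : 0 < H by rewrite /H ltr_wpDl.
move: H_gt0 Ht_gt0; rewrite /u /marginal /curvature /H => H_gt0 Ht_gt0.
by rewrite addrA; field; rewrite !gt_eqF.
Qed.

Hypothesis h_best : forall x, 0 < x -> u x - k <= u h - k.

Lemma best_response_foc : Rw * S = (c + g * h) * (S + h) ^+ 2.
Proof.
have H_gt0 : 0 < H by rewrite /H ltr_wpDl.
have RwS_ge0 : 0 <= Rw * S by rewrite mulr_ge0.
have curvature_le x : H / 2 <= H + x -> curvature x <= 2 * (Rw * S) / H ^+ 3 + g / 2.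
  move=> Ht.
  have -> : 2 * (Rw * S) / H ^+ 3 = Rw * S / (H ^+ 2 * (H / 2)).
    by field; rewrite gt_eqF.
  have Hx_gt0 : 0 < H + x by apply: lt_le_trans Ht; rewrite divr_gt0.
  rewrite lerD2r ler_wpM2l // lef_pV2 ?posrE ?mulr_gt0 ?exprn_gt0 ?invr_gt0 //.
  by rewrite ler_wpM2l ?sqr_ge0.
(* Deviating to h + t or h - t never pays, so the marginal payoff is within O(t) of 0 on both sides. *)
have gain_le0 x : 0 < h + x -> x * (marginal - x * curvature x) <= 0.
  move=> ht; rewrite -payoff_increment; last by rewrite /H -addrA ltr_wpDl.
  by rewrite subr_le0 -(lerD2r (- k)) h_best.
have marginal_le0 : marginal <= 0.
  apply: (@ler_of_small_slack _ _ (2 * (Rw * S) / H ^+ 3 + g / 2) 1) => // t t_gt0 _.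
  have := gain_le0 t; rewrite pmulr_rle0 ?subr_le0 ?addr_gt0 // => /(_ isT) mt.
  rewrite add0r; apply: le_trans mt _; rewrite ler_pM2l // curvature_le //.
  by move: t_gt0 (ltW H_gt0); lra.
have marginal_ge0 : 0 <= marginal.
  apply: (@ler_of_small_slack _ _ (2 * (Rw * S) / H ^+ 3 + g / 2) (h / 2)) => [|s s_gt0 s_le].
    exact: divr_gt0.
  have := gain_le0 (- s); rewrite mulNr oppr_le0 pmulr_rge0 // mulNr opprK => mt.
  have {}mt : 0 <= marginal + s * curvature (- s) by apply: mt; lra.
  have : s * curvature (- s) <= s * (2 * (Rw * S) / H ^+ 3 + g / 2).
    by rewrite ler_pM2l // curvature_le // /H; move: s_le S_ge0; lra.
  lra.
have : marginal == 0 by rewrite eq_le marginal_le0 marginal_ge0.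
rewrite subr_eq0 => /eqP <-.
by rewrite -/H; field; rewrite gt_eqF.
Qed.

End BestResponse.

Section Equilibrium.
Variables (R : realType) (N : nat).
Implicit Types (h c : 'I_N -> R) (i j : 'I_N).

Lemma totH_ge h i : (forall j, 0 <= h j) -> h i <= totH h.
Proof. by move=> h_ge0; rewrite /totH (bigD1 i) //= lerDl sumr_ge0. Qed.

Lemma totH_gt0 h i : (forall j, 0 <= h j) -> 0 < h i -> 0 < totH h.
Proof. by move=> h_ge0 hi_gt0; apply: lt_le_trans hi_gt0 (totH_ge i h_ge0). Qed.

Lemma totH_upd h i x : totH (upd h i x) = totH h - h i + x.
Proof.
rewrite /totH (bigD1 i) //= [in RHS](bigD1 i) //= /upd eqxx.
under eq_bigr => j /negbTE -> do [].
by rewrite [h i + _]addrC addrK addrC.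
Qed.

Lemma closed_form_lt_total (Rw g c H hi : R) :
  0 < Rw -> 0 <= g -> 0 < c -> 0 < H ->
  hi * (Rw + g * H ^+ 2) = H * (Rw - c * H) -> hi < H.
Proof.
move=> Rw_gt0 g_ge0 c_gt0 H_gt0 closed.
have Q_gt0 : 0 < Rw + g * H ^+ 2 by rewrite ltr_pwDl // mulr_ge0 // sqr_ge0.
rewrite -subr_gt0 -(pmulr_lgt0 _ Q_gt0) mulrBl closed.
have -> : H * (Rw + g * H ^+ 2) - H * (Rw - c * H) = H * (g * H ^+ 2 + c * H) by ring.
have : 0 <= g * H ^+ 2 by rewrite mulr_ge0 ?sqr_ge0.
have : 0 < c * H by rewrite mulr_gt0.
by move=> *; rewrite mulr_gt0 //; lra.
Qed.

Lemma closed_form_antitone (Rw g ci cj H hi hj : R) :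
  0 < Rw + g * H ^+ 2 -> ci <= cj ->
  hi * (Rw + g * H ^+ 2) = H * (Rw - ci * H) ->
  hj * (Rw + g * H ^+ 2) = H * (Rw - cj * H) -> hj <= hi.
Proof.
move=> Q_gt0 cij closed_i closed_j.
rewrite -subr_le0 -(pmulr_lle0 _ Q_gt0) mulrBl closed_i closed_j.
have -> : H * (Rw - cj * H) - H * (Rw - ci * H) = - ((cj - ci) * H ^+ 2) by ring.
by rewrite oppr_le0 mulr_ge0 ?sqr_ge0 ?subr_ge0.
Qed.

Lemma lt_csum_active (ct h : 'I_N -> R) n i :
  (forall j, 0 < ct j) -> (forall j, 0 <= h j) -> (forall j, (0 < h j) = (j < n)%N) ->
  (i < n)%N -> h i < totH h -> ct i < csum ct n.
Proof.
move=> ct_gt0 h_ge0 active i_act hi_lt.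
have [j /andP[ji hj_gt0]] : exists j, (j != i) && (0 < h j).
  have : 0 < \sum_(j < N | j != i) h j.
    by move: hi_lt; rewrite /totH (bigD1 i) //= ltrDl.
  by move/lt0r_neq0/eqP; apply: psumr_neq0P => j _.
rewrite active in hj_gt0.
rewrite /csum (bigD1 i) //= (bigD1 j) /=; last by rewrite hj_gt0 ji.
rewrite ltrDl ltr_wpDr ?sumr_ge0 // => k _; exact: ltW.
Qed.

Variables (ct : 'I_N -> R) (ct0 eta Rw gamma K : R) (A0 : pred 'I_N) (beta : 'I_N -> R).
Hypothesis Rw_ge0 : 0 <= Rw.

Lemma is_NE_foc h i : is_NE ct ct0 eta Rw gamma K A0 beta h -> 0 < h i ->
  Rw * (totH h - h i) = (cost ct0 (ct i) eta (beta i) + gamma * h i) * totH h ^+ 2.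
Proof.
move=> [h_ge0 h_best] hi_gt0.
have H_gt0 := totH_gt0 h_ge0 hi_gt0.
rewrite -{2}(subrK (h i) (totH h)).
apply: (best_response_foc (k := if ~~ A0 i && (0 < beta i) then K else 0)) => //.
  by rewrite subr_ge0 totH_ge.
move=> x x_gt0; have := h_best i x (ltW x_gt0).
have Hx_gt0 : 0 < totH h - h i + x by rewrite ltr_wpDl // subr_ge0 totH_ge.
by rewrite /payoff totH_upd /upd eqxx Hx_gt0 H_gt0 subrK.
Qed.

Variable n : nat.

Lemma is_NE_closed_form h c :
  is_NE ct ct0 eta Rw gamma K A0 beta h -> (forall j, (0 < h j) = (j < n)%N) ->
  (forall j, (j < n)%N -> cost ct0 (ct j) eta (beta j) = c j) -> 0 < totH h ->
  (forall j, (j < n)%N ->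
     h j * (Rw + gamma * totH h ^+ 2) = totH h * (Rw - c j * totH h)) /\
  Rw + gamma * totH h ^+ 2 =
    (\sum_(j < N | (j < n)%N) 1) * Rw - (\sum_(j < N | (j < n)%N) c j) * totH h.
Proof.
move=> NE active costE H_gt0; have h_ge0 : forall j, 0 <= h j by case: NE.
have closed j : (j < n)%N ->
    h j * (Rw + gamma * totH h ^+ 2) = totH h * (Rw - c j * totH h).
  move=> jn; have := is_NE_foc (i := j) NE; rewrite active costE // => /(_ jn) foc; lra.
split => //.
have inactive0 j : ~~ (j < n)%N -> h j = 0.
  by rewrite -active => /negbTE hj; apply/eqP; rewrite eq_le h_ge0 andbT leNgt hj.
have H_active : totH h = \sum_(j < N | (j < n)%N) h j.
  by rewrite /totH (bigID (fun j : 'I_N => (j < n)%N)) /= [X in _ + X]big1 ?addr0.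
apply: (mulfI (lt0r_neq0 H_gt0)).
rewrite [X in X * _ = _]H_active mulr_suml (eq_bigr _ closed) -mulr_sumr sumrB.
congr (_ * (_ - _)); rewrite mulr_suml //.
by apply: eq_bigr => j _; rewrite mul1r.
Qed.

End Equilibrium.

Section Perturbation.
Variable R : realType.

Lemma normrM3_le (a b x A B X : R) :
  `|a| <= A -> `|b| <= B -> `|x| <= X -> `|a * b * x| <= A * B * X.
Proof.
move=> aA bB xX; rewrite !normrM.
by apply: ler_pM => //; rewrite ?mulr_ge0 //; apply: ler_pM.
Qed.

Lemma norm_affine_div_le (a b H1 H0 Y Y0 : R) :
  0 <= H1 -> H1 <= 2 * H0 -> 0 < Y0 -> Y0 <= Y ->
  `|(a + b * H1) / Y| <= (`|a| + `|b| * (2 * H0)) / Y0.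
Proof.
move=> H1_ge0 H1_le Y0_gt0 Y0_le.
have Y_gt0 : 0 < Y by apply: lt_le_trans Y0_le.
have num_le : `|a + b * H1| <= `|a| + `|b| * (2 * H0).
  apply: le_trans (ler_normD _ _) _; rewrite lerD2l normrM (ger0_norm H1_ge0).
  exact: ler_wpM2l.
rewrite normrM normfV (gtr0_norm Y_gt0).
apply: le_trans (ler_wpM2r _ num_le) _; first by rewrite invr_ge0 ltW.
apply: ler_wpM2l; first exact: le_trans num_le.
by rewrite lef_pV2 // posrE.
Qed.

Lemma aggregate_shift (Rw g m C Ib H0 H1 : R) :
  Rw + g * H0 ^+ 2 = m * Rw - C * H0 ->
  Rw + g * H1 ^+ 2 = m * Rw - (C - Ib) * H1 ->
  (H1 - H0) * (g * (H1 + H0) + C) = Ib * H1.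
Proof. by move=> agg0 agg1; apply/eqP; rewrite -subr_eq0; apply/eqP; lra. Qed.

Variables (Rw g C c H0 : R).
Hypotheses (Rw_gt0 : 0 < Rw) (g_ge0 : 0 <= g) (C_gt0 : 0 < C) (H0_gt0 : 0 < H0).

(* The post-investment equilibrium (total H1, miner rate h1, own and aggregate cost
   reductions I and Ib), seen only through the shifted aggregate equation and the closed
   form of h1; the smallness condition Ib <= C / 2 keeps H1 below 2 H0. *)
Definition perturbed_equilibrium (H1 h1 I Ib : R) : Prop :=
  [/\ 0 < H1, 0 <= I <= Ib, Ib <= C / 2,
      (H1 - H0) * (g * (H1 + H0) + C) = Ib * H1 &
      h1 * (Rw + g * H1 ^+ 2) = H1 * (Rw - (c - I) * H1)].

Lemma perturbation_bounds H1 h1 I Ib : perturbed_equilibrium H1 h1 I Ib ->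
  [/\ 0 <= H1 - H0 <= 2 * H0 / C * Ib, H1 <= 2 * H0 &
      `|Ib - g * (H1 - H0)| <= (1 + g * (2 * H0 / C)) * Ib].
Proof.
case=> H1_gt0 /andP[I_ge0 I_le] Ib_le shift _.
have Ib_ge0 : 0 <= Ib by exact: le_trans I_le.
set D := g * (H1 + H0) + C in shift.
have C_le_D : C <= D by rewrite lerDr mulr_ge0 // addr_ge0 // ltW.
have D_gt0 : 0 < D by exact: lt_le_trans C_le_D.
have dH_ge0 : 0 <= H1 - H0.
  by rewrite -(pmulr_lge0 _ D_gt0) shift mulr_ge0 // ltW.
have H1_le : H1 <= 2 * H0.
  have : (H1 / 2 - H0) * D <= 0.
    have -> : (H1 / 2 - H0) * D = (H1 - H0) * D - D / 2 * H1 by field.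
    rewrite shift subr_le0 ler_wpM2r ?(ltW H1_gt0) //; lra.
  rewrite pmulr_lle0 //; lra.
have dH_le : H1 - H0 <= 2 * H0 / C * Ib.
  rewrite mulrAC ler_pdivlMr //.
  have : (H1 - H0) * C <= (H1 - H0) * D by apply: ler_wpM2l.
  have : Ib * H1 <= Ib * (2 * H0) by apply: ler_wpM2l.
  lra.
split=> //; first by rewrite dH_ge0.
have : g * (H1 - H0) <= g * (2 * H0 / C * Ib) by apply: ler_wpM2l.
have : 0 <= g * (H1 - H0) by apply: mulr_ge0.
by rewrite ler_norml; move=> *; apply/andP; split; lra.
Qed.

Definition second_order_remainder (a1 b1 a2 b2 c3 H1 I Ib : R) : R :=
  I * (H1 - H0) * ((a1 + b1 * H1) / ((Rw + g * H0 ^+ 2) * (Rw + g * H1 ^+ 2)))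
  + (H1 - H0) * (H1 - H0) * ((a2 + b2 * H1) / ((Rw + g * H0 ^+ 2) ^+ 2 * (Rw + g * H1 ^+ 2)))
  + (H1 - H0) * (Ib - g * (H1 - H0)) * c3.

Lemma second_order_remainder_bound (a1 b1 a2 b2 c3 : R) :
  exists K, forall H1 h1 I Ib, perturbed_equilibrium H1 h1 I Ib ->
  `|second_order_remainder a1 b1 a2 b2 c3 H1 I Ib| <= K * Ib ^+ 2.
Proof.
have Q0_gt0 : 0 < Rw + g * H0 ^+ 2 by rewrite ltr_pwDl // mulr_ge0 // sqr_ge0.
pose k := 2 * H0 / C.
pose X1 := (`|a1| + `|b1| * (2 * H0)) / ((Rw + g * H0 ^+ 2) * Rw).
pose X2 := (`|a2| + `|b2| * (2 * H0)) / ((Rw + g * H0 ^+ 2) ^+ 2 * Rw).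
exists (k * X1 + k * k * X2 + k * (1 + g * k) * `|c3|).
move=> H1 h1 I Ib pert; rewrite /second_order_remainder.
have [/andP[dH_ge0 dH_le] H1_le Ib_gH] := perturbation_bounds pert.
have [H1_gt0 /andP[I_ge0 I_le] _ _ _] := pert.
have Q1_ge : Rw <= Rw + g * H1 ^+ 2 by rewrite lerDl mulr_ge0 // sqr_ge0.
have nI : `|I| <= Ib by rewrite ger0_norm.
have ndH : `|H1 - H0| <= k * Ib by rewrite ger0_norm.
have t1 := normrM3_le nI ndH (norm_affine_div_le a1 b1 (ltW H1_gt0) H1_le
  (mulr_gt0 Q0_gt0 Rw_gt0) (ler_wpM2l (ltW Q0_gt0) Q1_ge)).
have t2 := normrM3_le ndH ndH (norm_affine_div_le a2 b2 (ltW H1_gt0) H1_le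
  (mulr_gt0 (exprn_gt0 2 Q0_gt0) Rw_gt0) (ler_wpM2l (ltW (exprn_gt0 2 Q0_gt0)) Q1_ge)).
have t3 := normrM3_le ndH Ib_gH (lexx `|c3|).
rewrite -/X1 -/X2 in t1 t2.
have -> : (k * X1 + k * k * X2 + k * (1 + g * k) * `|c3|) * Ib ^+ 2 =
    Ib * (k * Ib) * X1 + k * Ib * (k * Ib) * X2
    + k * Ib * ((1 + g * (2 * H0 / C)) * Ib) * `|c3| by rewrite /k; ring.
apply: le_trans (ler_normD _ _) _.
by apply: lerD => //; apply: le_trans (ler_normD _ _) _; apply: lerD.
Qed.

Lemma perturbed_closed_forms H1 h1 I Ib : perturbed_equilibrium H1 h1 I Ib ->
  [/\ h1 = H1 * (Rw - (c - I) * H1) / (Rw + g * H1 ^+ 2),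
      Ib = (H1 - H0) * (g * (H1 + H0) + C) / H1,
      0 < Rw + g * H1 ^+ 2 & 0 < H1].
Proof.
case=> H1_gt0 _ _ shift h1_closed.
have Q1_gt0 : 0 < Rw + g * H1 ^+ 2 by rewrite ltr_pwDl // mulr_ge0 // sqr_ge0.
by split; rewrite // ?shift -?h1_closed mulfK // gt_eqF.
Qed.

End Perturbation.

Section Coefficients.
Variables (R : realType) (N : nat) (ct h0 : 'I_N -> R) (Rw gamma : R) (n : nat) (i : 'I_N).
Hypotheses (Rw_gt0 : 0 < Rw) (gamma_ge0 : 0 <= gamma)
  (ci_gt0 : 0 < ct i) (ci_lt : ct i < csum ct n)
  (hi_gt0 : 0 < h0 i) (hi_lt : h0 i < totH h0)
  (hi_closed : h0 i * (Rw + gamma * totH h0 ^+ 2) = totH h0 * (Rw - ct i * totH h0)).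

Let H0_gt0 : 0 < totH h0. Proof. exact: lt_trans hi_lt. Qed.
Let C_gt0 : 0 < csum ct n. Proof. exact: lt_trans ci_lt. Qed.
Let Q0_gt0 : 0 < Rw + gamma * totH h0 ^+ 2.
Proof. by rewrite ltr_pwDl // mulr_ge0 // sqr_ge0. Qed.
Let D0_gt0 : 0 < csum ct n + 2 * gamma * totH h0.
Proof. by rewrite ltr_wpDr // !mulr_ge0 // ltW. Qed.
Let margin_gt0 : 0 < Rw - ct i * totH h0.
Proof. by rewrite -(pmulr_rgt0 _ H0_gt0) -hi_closed mulr_gt0. Qed.
Let hiE : h0 i = totH h0 * (Rw - ct i * totH h0) / (Rw + gamma * totH h0 ^+ 2).
Proof. by rewrite -hi_closed mulfK // gt_eqF. Qed.

Lemma a_plus_gt0 : 0 < a_plus ct Rw gamma n h0 i.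
Proof.
have -> : a_plus ct Rw gamma n h0 i =
    (totH h0 ^+ 2 * (csum ct n - ct i) + 2 * gamma * totH h0 ^+ 2 * (totH h0 - h0 i)
     + h0 i * (Rw + gamma * totH h0 ^+ 2))
    / ((Rw + gamma * totH h0 ^+ 2) * (csum ct n + 2 * gamma * totH h0)).
  by rewrite /a_plus /a_minus; field; rewrite !gt_eqF.
apply: divr_gt0; last exact: mulr_gt0.
have : 0 < totH h0 ^+ 2 * (csum ct n - ct i) by rewrite mulr_gt0 ?exprn_gt0 ?subr_gt0.
have : 0 <= 2 * gamma * totH h0 ^+ 2 * (totH h0 - h0 i).
  by apply: mulr_ge0; [rewrite !mulr_ge0 // ltW | rewrite subr_ge0 ltW].
have : 0 < h0 i * (Rw + gamma * totH h0 ^+ 2) by rewrite mulr_gt0.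
lra.
Qed.

Lemma a_minus_lt0_iff : a_minus ct Rw gamma n h0 i < 0 <-> h0 i / totH h0 < 1 / 2.
Proof.
have ciE : ct i = (Rw * totH h0 - h0 i * (Rw + gamma * totH h0 ^+ 2)) / totH h0 ^+ 2.
  by rewrite hi_closed; field; rewrite gt_eqF.
have -> : a_minus ct Rw gamma n h0 i = (2 * h0 i - totH h0) *
    (Rw / ((Rw + gamma * totH h0 ^+ 2) * (csum ct n + 2 * gamma * totH h0))).
  by rewrite /a_minus ciE; field; rewrite !gt_eqF.
rewrite pmulr_llt0; last by rewrite divr_gt0 // mulr_gt0.
by rewrite ltr_pdivrMr //; split=> ?; lra.
Qed.

Lemma alpha0_gt0 : 0 < alpha0 Rw gamma h0.
Proof. exact: divr_gt0. Qed.

Lemma alpha_i_gt0_lt1 : 0 < alpha_i ct gamma n h0 i < 1.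
Proof.
rewrite /alpha_i divr_gt0 ?ltr_wpDr ?mulr_ge0 ?(ltW hi_gt0) ?(ltW H0_gt0) //=.
rewrite ltr_pdivrMr // mul1r.
have : gamma * h0 i <= gamma * totH h0 by rewrite ler_wpM2l // ltW.
move: ci_lt; lra.
Qed.

Lemma hashrate_expansion : exists K, forall H1 h1 I Ib,
  perturbed_equilibrium Rw gamma (csum ct n) (ct i) (totH h0) H1 h1 I Ib ->
  `|h1 - h0 i - a_plus ct Rw gamma n h0 i * I - a_minus ct Rw gamma n h0 i * (Ib - I)|
  <= K * Ib ^+ 2.
Proof.
have [K bound] := second_order_remainder_bound (ct i) Rw_gt0 gamma_ge0 C_gt0 H0_gt0
  (Rw * totH h0) Rw
  (- (Rw * (Rw * ct i + 2 * Rw * gamma * totH h0 - ct i * gamma * totH h0 ^+ 2)))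
  (- (Rw * (Rw * gamma - 2 * ct i * gamma * totH h0 - gamma ^+ 2 * totH h0 ^+ 2)))
  (Rw * (Rw - 2 * ct i * totH h0 - gamma * totH h0 ^+ 2)
   / (Rw + gamma * totH h0 ^+ 2) ^+ 2 / (csum ct n + 2 * gamma * totH h0)).
exists K => H1 h1 I Ib pert; apply: le_trans (bound _ _ _ _ pert).
have [-> -> Q1_gt0 H1_gt0] := perturbed_closed_forms Rw_gt0 gamma_ge0 pert.
rewrite /a_plus /a_minus /second_order_remainder hiE le_eqVlt; apply/orP; left.
by apply/eqP; congr `|_|; field; rewrite !gt_eqF.
Qed.

Lemma share_expansion : exists K, forall H1 h1 I Ib,
  perturbed_equilibrium Rw gamma (csum ct n) (ct i) (totH h0) H1 h1 I Ib ->
  `|h1 / H1 - h0 i / totH h0 - alpha0 Rw gamma h0 *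
    ((1 - alpha_i ct gamma n h0 i) * I - alpha_i ct gamma n h0 i * (Ib - I))|
  <= K * Ib ^+ 2.
Proof.
have [K bound] := second_order_remainder_bound (ct i) Rw_gt0 gamma_ge0 C_gt0 H0_gt0
  Rw (- (gamma * totH h0))
  (- (Rw ^+ 2 * gamma) + 2 * ct i * Rw * gamma * totH h0 + Rw * gamma ^+ 2 * totH h0 ^+ 2)
  (ct i * Rw * gamma + 2 * Rw * gamma ^+ 2 * totH h0 - ct i * gamma ^+ 2 * totH h0 ^+ 2)
  ((- (2 * Rw * gamma * totH h0) - ct i * Rw + ct i * gamma * totH h0 ^+ 2)
   / (Rw + gamma * totH h0 ^+ 2) ^+ 2 / (csum ct n + 2 * gamma * totH h0)).
exists K => H1 h1 I Ib pert; apply: le_trans (bound _ _ _ _ pert).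
have [-> -> Q1_gt0 H1_gt0] := perturbed_closed_forms Rw_gt0 gamma_ge0 pert.
rewrite /alpha0 /alpha_i /second_order_remainder hiE le_eqVlt; apply/orP; left.
by apply/eqP; congr `|_|; field; rewrite !gt_eqF.
Qed.

End Coefficients.

Section Investment.
Variables (R : realType) (N : nat) (ct : 'I_N -> R) (ct0 : R) (n : nat).
Hypotheses (ct_gt0 : forall j, 0 < ct j) (ct0_gt0 : 0 < ct0) (ct0_le : forall j, ct0 <= ct j).
Implicit Types (i j : 'I_N) (eta : R).

Lemma cost0 (cti eta : R) : cost ct0 cti eta 0 = cti.
Proof. by rewrite /cost; ring. Qed.

Lemma cost_beta_star eta j :
  cost ct0 (ct j) eta (beta_star N n eta j) = ct j - Ired ct ct0 n eta j.
Proof. by rewrite /Ired cost0; ring. Qed.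

Lemma Ired_eta eta j : 1 <= eta -> (j < n)%N ->
  Ired ct ct0 n eta j = (ct j - ct0) / (2 * eta).
Proof.
move=> eta_ge1 j_act; have eta_gt0 : 0 < eta by exact: lt_le_trans eta_ge1.
rewrite /Ired /beta_star j_act min_l; last by rewrite invf_le1.
by rewrite /cost; field; rewrite gt_eqF.
Qed.

Lemma Ired_ge0 eta j : 1 <= eta -> (j < n)%N -> 0 <= Ired ct ct0 n eta j.
Proof.
move=> eta_ge1 j_act; rewrite Ired_eta // divr_ge0 ?subr_ge0 //.
by rewrite mulr_ge0 // (le_trans ler01).
Qed.

Lemma Ired_le_Ibar eta j : 1 <= eta -> (j < n)%N ->
  Ired ct ct0 n eta j <= Ibar ct ct0 n eta.
Proof.
move=> eta_ge1 j_act; rewrite /Ibar (bigD1 j) //= lerDl.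
by apply: sumr_ge0 => k /andP[k_act _]; exact: Ired_ge0.
Qed.

Lemma Ibar_le_half_csum eta : 1 <= eta -> Ibar ct ct0 n eta <= csum ct n / 2.
Proof.
move=> eta_ge1; have eta_gt0 : 0 < eta by exact: lt_le_trans eta_ge1.
rewrite /Ibar /csum mulr_suml ler_sum // => j j_act.
rewrite Ired_eta // ler_pdivrMr ?mulr_gt0 //.
have : ct j <= ct j * eta by rewrite ler_peMr // (le_trans (ltW ct0_gt0)).
move: (ct0_le j) ct0_gt0; lra.
Qed.

Lemma two_eta_Ibar_lt_csum eta i : 1 <= eta -> (i < n)%N ->
  2 * eta * Ibar ct ct0 n eta < csum ct n.
Proof.
move=> eta_ge1 i_act; have eta_gt0 : 0 < eta by exact: lt_le_trans eta_ge1.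
have -> : 2 * eta * Ibar ct ct0 n eta = \sum_(j < N | (j < n)%N) (ct j - ct0).
  rewrite /Ibar mulr_sumr; apply: eq_bigr => j j_act; rewrite Ired_eta //.
  by field; rewrite gt_eqF.
rewrite sumrB /csum ltrBlDr ltrDl (bigD1 i) //= ltr_wpDr // sumr_ge0 // => j _.
exact: ltW.
Qed.

Variables (Rw gamma K : R) (h0 : 'I_N -> R) (i : 'I_N).
Hypotheses (Rw_gt0 : 0 < Rw) (gamma_ge0 : 0 <= gamma)
  (NE0 : is_NE ct ct0 0 Rw gamma K (fun j : 'I_N => (j < n)%N) (fun _ => 0) h0)
  (active0 : forall j : 'I_N, (0 < h0 j) = (j < n)%N) (i_act : (i < n)%N).

Let h0_ge0 : forall j, 0 <= h0 j. Proof. by case: NE0. Qed.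

Lemma totH0_gt0 : 0 < totH h0.
Proof. by apply: (totH_gt0 h0_ge0 (i := i)); rewrite active0. Qed.

Lemma initial_closed_form :
  (forall j : 'I_N, (j < n)%N ->
     h0 j * (Rw + gamma * totH h0 ^+ 2) = totH h0 * (Rw - ct j * totH h0)) /\
  Rw + gamma * totH h0 ^+ 2 =
    (\sum_(j < N | (j < n)%N) 1) * Rw - csum ct n * totH h0.
Proof.
apply: (is_NE_closed_form (c := ct) (ltW Rw_gt0) NE0 active0 _ totH0_gt0).
by move=> j _; rewrite cost0.
Qed.

Lemma initial_lt_totH : h0 i < totH h0.
Proof.
have [closed0 _] := initial_closed_form.
exact: closed_form_lt_total Rw_gt0 gamma_ge0 (ct_gt0 i) totH0_gt0 (closed0 i i_act).
Qed.

Lemma initial_ct_lt_csum : ct i < csum ct n.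
Proof. exact: lt_csum_active ct_gt0 h0_ge0 active0 i_act initial_lt_totH. Qed.

Lemma beta_star_perturbed eta hs : 1 <= eta ->
  is_NE ct ct0 eta Rw gamma K (fun j : 'I_N => (j < n)%N) (beta_star N n eta) hs ->
  (forall j : 'I_N, (0 < hs j) = (j < n)%N) ->
  perturbed_equilibrium Rw gamma (csum ct n) (ct i) (totH h0)
    (totH hs) (hs i) (Ired ct ct0 n eta i) (Ibar ct ct0 n eta).
Proof.
move=> eta_ge1 NE active.
have hs_ge0 : forall j, 0 <= hs j by case: NE.
have H_gt0 : 0 < totH hs by apply: (totH_gt0 hs_ge0 (i := i)); rewrite active.
have [closed agg] := is_NE_closed_form (ltW Rw_gt0) NE active
  (fun j _ => cost_beta_star eta j) H_gt0.
have [_ agg0] := initial_closed_form.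
rewrite sumrB -/(csum ct n) -/(Ibar ct ct0 n eta) in agg.
split=> //; last exact: closed.
- by rewrite Ired_ge0 // Ired_le_Ibar.
- exact: Ibar_le_half_csum.
- exact: aggregate_shift agg0 agg.
Qed.

Lemma Qshift_lt_of_ct_lt j eta : (j < n)%N -> ct i < ct j -> 1 < eta ->
  Qshift ct ct0 gamma n h0 eta i < Qshift ct ct0 gamma n h0 eta j.
Proof.
move=> j_act cij eta_gt1; have eta_ge1 := ltW eta_gt1.
have eta_gt0 : 0 < eta by exact: lt_trans eta_gt1.
have [closed0 _] := initial_closed_form.
have hji : h0 j <= h0 i.
  apply: closed_form_antitone (ltW cij) (closed0 i i_act) (closed0 j j_act).
  by rewrite ltr_pwDl // mulr_ge0 // sqr_ge0.
have Ib_ge0 : 0 <= Ibar ct ct0 n eta.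
  by apply: le_trans (Ired_le_Ibar eta_ge1 i_act); exact: Ired_ge0.
have Ib_lt : 2 * eta * Ibar ct ct0 n eta < csum ct n + 2 * gamma * totH h0.
  apply: lt_le_trans (two_eta_Ibar_lt_csum eta_ge1 i_act) _.
  by rewrite lerDl !mulr_ge0 // ltW // totH0_gt0.
have D_gt0 : 0 < csum ct n + 2 * gamma * totH h0.
  by apply: le_lt_trans Ib_lt; rewrite !mulr_ge0 // ltW.
rewrite -subr_gt0.
have -> : Qshift ct ct0 gamma n h0 eta j - Qshift ct ct0 gamma n h0 eta i =
    (ct j - ct i) * ((csum ct n + 2 * gamma * totH h0 - 2 * eta * Ibar ct ct0 n eta)
                     / (2 * eta * (csum ct n + 2 * gamma * totH h0)))
    + 2 * gamma * (h0 i - h0 j) / (csum ct n + 2 * gamma * totH h0) * Ibar ct ct0 n eta.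
  by rewrite /Qshift /alpha_i !Ired_eta //; field; rewrite !gt_eqF.
rewrite ltr_pwDl ?mulr_gt0 ?invr_gt0 ?subr_gt0 ?mulr_gt0 //.
by rewrite !mulr_ge0 ?invr_ge0 ?subr_ge0 ?(ltW D_gt0).
Qed.

End Investment.

Theorem proposition5p3 (R : realType) (N : nat) (ct : 'I_N -> R)
  (ct0 Rw gamma K : R) (n : nat) (h0 : 'I_N -> R) (hs : R -> 'I_N -> R) :
  (2 <= N)%N ->
  (forall i, 0 < ct i) ->
  (forall i j : 'I_N, (i <= j)%N -> ct i <= ct j) ->
  0 < ct0 -> (forall i, ct0 <= ct i) ->
  0 < Rw -> 0 <= gamma -> 0 < K ->
  (* h0 = hstar(0), with A(0) = {1,...,n} *)
  is_NE ct ct0 0 Rw gamma K (fun j : 'I_N => (j < n)%N) (fun _ => 0) h0 ->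
  (forall i : 'I_N, (0 < h0 i) = (i < n)%N) ->
  (* for eta large, hs eta = hstar(beta_star) and A(beta_star) = A(0) *)
  (exists eta1 : R, forall eta, eta1 <= eta -> 0 < eta ->
     is_NE ct ct0 eta Rw gamma K (fun j : 'I_N => (j < n)%N)
       (beta_star N n eta) (hs eta) /\
     (forall i : 'I_N, (0 < hs eta i) = (i < n)%N)) ->
  forall i : 'I_N, (i < n)%N ->
  (exists C eta0 : R, forall eta, eta0 <= eta ->
     `| hs eta i - h0 i - a_plus ct Rw gamma n h0 i * Ired ct ct0 n eta i
        - a_minus ct Rw gamma n h0 i * (Ibar ct ct0 n eta - Ired ct ct0 n eta i) |
     <= C * (Ibar ct ct0 n eta) ^+ 2) /\
  0 < a_plus ct Rw gamma n h0 i /\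
  (a_minus ct Rw gamma n h0 i < 0 <-> h0 i / totH h0 < 1 / 2) /\
  (exists C eta0 : R, forall eta, eta0 <= eta ->
     `| hs eta i / totH (hs eta) - h0 i / totH h0
        - alpha0 Rw gamma h0 * Qshift ct ct0 gamma n h0 eta i |
     <= C * (Ibar ct ct0 n eta) ^+ 2) /\
  0 < alpha0 Rw gamma h0 /\
  0 < alpha_i ct gamma n h0 i < 1 /\
  (forall j : 'I_N, (j < n)%N -> ct i < ct j ->
     forall eta, 1 < eta ->
       Qshift ct ct0 gamma n h0 eta i < Qshift ct ct0 gamma n h0 eta j).
Proof.
move=> _ ct_gt0 _ ct0_gt0 ct0_le Rw_gt0 gamma_ge0 _ NE0 active0 [eta1 NEs] i i_act.
have hi_gt0 : 0 < h0 i by rewrite active0.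
have [/(_ i i_act) hi_closed _] := initial_closed_form Rw_gt0 NE0 active0 i_act.
have hi_lt := initial_lt_totH ct_gt0 Rw_gt0 gamma_ge0 NE0 active0 i_act.
have ci_lt := initial_ct_lt_csum ct_gt0 Rw_gt0 gamma_ge0 NE0 active0 i_act.
have perturbed eta : Num.max eta1 1 <= eta ->
    perturbed_equilibrium Rw gamma (csum ct n) (ct i) (totH h0)
      (totH (hs eta)) (hs eta i) (Ired ct ct0 n eta i) (Ibar ct ct0 n eta).
  rewrite ge_max => /andP[eta1_le eta_ge1].
  have [NE active] := NEs eta eta1_le (lt_le_trans ltr01 eta_ge1).
  exact: (beta_star_perturbed ct0_gt0 ct0_le Rw_gt0 NE0 active0 i_act eta_ge1 NE active).
have [K1 hashrate] :=
  hashrate_expansion Rw_gt0 gamma_ge0 (ct_gt0 i) ci_lt hi_gt0 hi_lt hi_closed.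
have [K2 share] :=
  share_expansion Rw_gt0 gamma_ge0 (ct_gt0 i) ci_lt hi_gt0 hi_lt hi_closed.
split; first by exists K1, (Num.max eta1 1) => eta /perturbed /hashrate.
split; first exact: a_plus_gt0.
split; first exact: a_minus_lt0_iff.
split; first by exists K2, (Num.max eta1 1) => eta /perturbed /share.
split; first exact: alpha0_gt0 hi_lt.
split; first exact: alpha_i_gt0_lt1.
move=> j j_act cij eta.
exact: (Qshift_lt_of_ct_lt ct0_gt0 ct0_le Rw_gt0 gamma_ge0 NE0 active0 i_act j_act cij).
Qed.
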